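(* Let $W\subset\mathbb{R}^{n+1}$ be a self-dual Wulff shape. Then $W$ is centrally symmetric (i.e. $x\in W$ implies $-x\in W$) if and only if $W$ is the unit disc $D^{n+1}=\{x\in\mathbb{R}^{n+1}:\|x\|\le1\}$.
   Context: For continuous $\gamma:S^n\to\mathbb{R}_+$, the Wulff shape is $\mathcal{W}_\gamma=\bigcap_{\theta\in S^n}\{x\in\mathbb{R}^{n+1}: x\cdot\theta\le\gamma(\theta)\}$ (every convex body with the origin in its interior is of this form). For each $\theta\in S^n$ the ray $\{r\theta:r>0\}$ meets $\partial\mathcal{W}_\gamma$ in exactly one point $w(\theta)\theta$. The dual Wulff shape is $\mathcal{DW}_\gamma=\mathcal{W}_{\overline\gamma}$ with $\overline\gamma(\theta)=1/w(-\theta)$, and $\mathcal{W}_\gamma$ is self-dual if $\mathcal{W}_\gamma=\mathcal{DW}_\gamma$. *)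

From Stdlib Require Import Reals.
Open Scope R_scope.

(* Points of R^{n+1} are represented as functions nat -> R; only the
   coordinates 0..n are ever used (all notions below depend only on them). *)
Definition pt := nat -> R.

Definition dot (n : nat) (x y : pt) : R := sum_f_R0 (fun i => x i * y i) n.
Definition dist (n : nat) (x y : pt) : R :=
  sqrt (dot n (fun i => x i - y i) (fun i => x i - y i)).
Definition scal (r : R) (x : pt) : pt := fun i => r * x i.
Definition opp (x : pt) : pt := fun i => - x i.

Definition sphere (n : nat) (th : pt) : Prop := dot n th th = 1.

Definition positive_on_sphere (n : nat) (g : pt -> R) : Prop :=
  forall th, sphere n th -> 0 < g th.
Definition continuous_on_sphere (n : nat) (g : pt -> R) : Prop :=
  forall th, sphere n th -> forall eps, 0 < eps -> exists delta, 0 < delta /\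
    forall th', sphere n th' -> dist n th th' < delta -> Rabs (g th' - g th) < eps.

Definition Wulff (n : nat) (g : pt -> R) (x : pt) : Prop :=
  forall th, sphere n th -> dot n x th <= g th.

Definition boundary (n : nat) (A : pt -> Prop) (x : pt) : Prop :=
  forall eps, 0 < eps ->
    (exists y, dist n x y < eps /\ A y) /\ (exists y, dist n x y < eps /\ ~ A y).

(* w(theta): the (unique) r > 0 with r theta on the boundary of W_gamma *)
Definition radial (n : nat) (g : pt -> R) (th : pt) (r : R) : Prop :=
  0 < r /\ boundary n (Wulff n g) (scal r th).

(* dual Wulff shape: W_{gbar} with gbar(theta) = 1 / w(-theta) *)
Definition dualWulff (n : nat) (g : pt -> R) (x : pt) : Prop :=
  forall th, sphere n th -> forall r, radial n g (opp th) r -> dot n x th <= 1 / r.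

Definition self_dual (n : nat) (g : pt -> R) : Prop :=
  forall x, Wulff n g x <-> dualWulff n g x.

Definition centrally_symmetric (A : pt -> Prop) : Prop :=
  forall x, A x -> A (opp x).

Definition unit_disc (n : nat) (x : pt) : Prop := dot n x x <= 1.

(* If [W] is self-dual and centrally symmetric, then for [x] in [W] with
   [|x| = s] and [θ = x/s], the point [-x = s(-θ)] lies in [W], so
   [w(-θ) >= s]; self-duality gives [s = x·θ <= 1/w(-θ) <= 1/s], i.e.
   [|x| <= 1].  Conversely, once [W] lies in the unit disc, every boundary
   point of [W] does too, so [w <= 1] on the sphere and the dual shape,
   hence [W], contains the disc. *)

From Pilot Require Import Defs.
From Stdlib Require Import Reals Lra FunctionalExtensionality.
Open Scope R_scope.

Lemma dot_scal_l n t x y : dot n (scal t x) y = t * dot n x y.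
Proof. unfold dot, scal; induction n; simpl; [ring | rewrite IHn; ring]. Qed.

Lemma dot_scal_r n t x y : dot n x (scal t y) = t * dot n x y.
Proof. unfold dot, scal; induction n; simpl; [ring | rewrite IHn; ring]. Qed.

Lemma dot_opp_opp n x : dot n (opp x) (opp x) = dot n x x.
Proof. unfold dot, opp; induction n; simpl; [ring | rewrite IHn; ring]. Qed.

Lemma dot_sub_l n x y z : dot n (fun i => x i - y i) z = dot n x z - dot n y z.
Proof. unfold dot; induction n; simpl; [ring | rewrite IHn; ring]. Qed.

Lemma dot_sub_scal_self n x y c :
  dot n (fun i => x i - c * y i) (fun i => x i - c * y i)
  = dot n x x - 2 * c * dot n x y + c * c * dot n y y.
Proof. unfold dot; induction n; simpl; [ring | rewrite IHn; ring]. Qed.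

Lemma dot_self_nonneg n x : 0 <= dot n x x.
Proof. unfold dot; induction n; simpl; nra. Qed.

(* Cauchy–Schwarz against a unit vector, from [|x - c u|^2 >= 0]. *)
Lemma dot_unit_le n x u c :
  dot n u u = 1 -> 0 < c -> dot n x x <= c * c -> dot n x u <= c.
Proof.
  intros Hu Hc Hx.
  pose proof (dot_self_nonneg n (fun i => x i - c * u i)) as Hsq.
  rewrite dot_sub_scal_self, Hu in Hsq. nra.
Qed.

Lemma dist_lt_sq n x y eps :
  Defs.dist n x y < eps -> dot n (fun i => x i - y i) (fun i => x i - y i) < eps * eps.
Proof.
  unfold Defs.dist. intro Hd.
  set (q := dot n _ _) in *.
  pose proof (dot_self_nonneg n (fun i => x i - y i)) as Hq. fold q in Hq.
  pose proof (sqrt_sqrt q Hq). pose proof (sqrt_pos q). nra.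
Qed.

Lemma dist_scal_unit n u a b :
  dot n u u = 1 -> Defs.dist n (scal a u) (scal b u) = Rabs (a - b).
Proof.
  intro Hu. unfold Defs.dist.
  change (fun i => scal a u i - scal b u i) with (fun i => scal a u i - b * u i).
  rewrite dot_sub_scal_self, dot_scal_l, dot_scal_l, dot_scal_r, Hu.
  replace (a * (a * 1) - 2 * b * (a * 1) + b * b * 1) with (Rsqr (a - b))
    by (unfold Rsqr; ring).
  apply sqrt_Rsqr_abs.
Qed.

Lemma sphere_normalize n x :
  0 < dot n x x -> sphere n (scal (/ sqrt (dot n x x)) x).
Proof.
  intro Hx. unfold sphere.
  rewrite dot_scal_l, dot_scal_r.
  pose proof (sqrt_lt_R0 _ Hx) as Hs. pose proof (sqrt_sqrt (dot n x x)) as Hss.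
  set (s := sqrt (dot n x x)) in *. rewrite <- Hss by lra. field. lra.
Qed.

Lemma sphere_opp n th : sphere n th -> sphere n (opp th).
Proof. unfold sphere. now rewrite dot_opp_opp. Qed.

Lemma boundary_ray_le_one n (A : pt -> Prop) u r :
  (forall y, A y -> unit_disc n y) -> dot n u u = 1 -> 0 < r ->
  boundary n A (scal r u) -> r <= 1.
Proof.
  intros HA Hu Hr Hb.
  destruct (Rle_or_lt r 1) as [| Hr1]; [assumption | exfalso].
  destruct (proj1 (Hb ((r - 1) / 2) ltac:(lra))) as [y [Hdy Ay]].
  assert (Hdu : dot n (fun i => scal r u i - y i) u <= (r - 1) / 2).
  { apply dot_unit_le; [exact Hu | lra |]. apply Rlt_le, dist_lt_sq, Hdy. }
  assert (Hyu : dot n y u <= 1).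
  { apply dot_unit_le; [exact Hu | lra |]. rewrite Rmult_1_r. apply HA, Ay. }
  rewrite dot_sub_l, dot_scal_l, Hu in Hdu. lra.
Qed.

Section WulffShape.

Variables (n : nat) (g : pt -> R).

(* The supremum of [{t >= 0 | t u ∈ W}] is attained, hence a radial value. *)
Lemma radial_ge u s :
  dot n u u = 1 -> 0 < s -> Wulff n g (scal s u) ->
  exists r, s <= r /\ radial n g u r.
Proof.
  intros Hu Hs Ws.
  set (E := fun t => 0 <= t /\ Wulff n g (scal t u)).
  assert (HE : bound E).
  { exists (g u). intros t [_ Wt]. specialize (Wt u Hu).
    rewrite dot_scal_l, Hu in Wt. lra. }
  destruct (completeness E HE (ex_intro _ s (conj (Rlt_le _ _ Hs) Ws)))
    as [r [Hub Hlub]].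
  assert (Hsr : s <= r) by (apply Hub; split; [lra | exact Ws]).
  assert (Wr : Wulff n g (scal r u)).
  { intros th Hth. rewrite dot_scal_l.
    destruct (Rle_or_lt (dot n u th) 0) as [Hut | Hut].
    - specialize (Ws th Hth). rewrite dot_scal_l in Ws. nra.
    - assert (Hbound : r <= g th / dot n u th).
      { apply Hlub. intros t [_ Wt]. specialize (Wt th Hth).
        rewrite dot_scal_l in Wt.
        apply Rmult_le_reg_r with (dot n u th); [exact Hut |].
        unfold Rdiv. rewrite Rmult_assoc, Rinv_l; lra. }
      replace (g th) with (g th / dot n u th * dot n u th) by (field; lra).
      apply Rmult_le_compat_r; lra. }
  exists r. split; [exact Hsr |]. split; [lra |].
  intros eps Heps. split.
  - exists (scal r u). rewrite dist_scal_unit, Rminus_diag, Rabs_R0 by exact Hu.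
    split; [exact Heps | exact Wr].
  - exists (scal (r + eps / 2) u). split.
    + rewrite dist_scal_unit by exact Hu.
      replace (r - (r + eps / 2)) with (- (eps / 2)) by ring.
      rewrite Rabs_Ropp, Rabs_pos_eq; lra.
    + intro W'. assert (r + eps / 2 <= r) by (apply Hub; split; [lra | exact W']).
      lra.
Qed.

Lemma Wulff_sub_disc :
  self_dual n g -> centrally_symmetric (Wulff n g) ->
  forall x, Wulff n g x -> unit_disc n x.
Proof.
  intros hsd hcs x Wx. unfold unit_disc.
  destruct (Rle_or_lt (dot n x x) 0) as [| Hx]; [lra |].
  pose proof (sqrt_lt_R0 _ Hx) as Hs. pose proof (sqrt_sqrt (dot n x x)) as Hss.
  pose proof (sphere_normalize n x Hx) as Hth.
  set (s := sqrt (dot n x x)) in *. set (th := scal (/ s) x) in *.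
  assert (Hopp : scal s (opp th) = opp x).
  { apply functional_extensionality. intro i. unfold th, scal, opp.
    field. lra. }
  destruct (radial_ge (opp th) s (sphere_opp n th Hth) Hs)
    as [r [Hsr Hr]]; [rewrite Hopp; apply hcs, Wx |].
  assert (Hxth : dot n x th = s).
  { unfold th. rewrite dot_scal_r, <- Hss by lra. field. lra. }
  pose proof (proj1 (hsd x) Wx th Hth r Hr) as Hdual.
  rewrite Hxth in Hdual.
  assert (s * r <= 1).
  { replace 1 with (1 / r * r) by (field; lra). apply Rmult_le_compat_r; lra. }
  rewrite <- Hss by lra. nra.
Qed.

Lemma disc_sub_dualWulff :
  (forall x, Wulff n g x -> unit_disc n x) ->
  forall x, unit_disc n x -> dualWulff n g x.
Proof.
  intros Hsub x Hx th Hth r [Hr Hb].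
  pose proof (boundary_ray_le_one n (Wulff n g) (opp th) r Hsub
                (sphere_opp n th Hth) Hr Hb) as Hr1.
  assert (Hxth : dot n x th <= 1).
  { apply dot_unit_le; [exact Hth | lra |]. rewrite Rmult_1_r. exact Hx. }
  assert (1 <= 1 / r).
  { unfold Rdiv. rewrite Rmult_1_l, <- Rinv_1. apply Rinv_le_contravar; lra. }
  lra.
Qed.

End WulffShape.

Lemma unit_disc_symmetric n : centrally_symmetric (unit_disc n).
Proof. intros x. unfold unit_disc. now rewrite dot_opp_opp. Qed.

Theorem proposition4p1 (n : nat) (g : pt -> R)
  (hpos : positive_on_sphere n g) (hcont : continuous_on_sphere n g)
  (hsd : self_dual n g) :
  centrally_symmetric (Wulff n g) <-> (forall x, Wulff n g x <-> unit_disc n x).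
Proof.
  split.
  - intros hcs x. pose proof (Wulff_sub_disc n g hsd hcs) as Hsub.
    split; [apply Hsub |].
    intro Hx. apply hsd, disc_sub_dualWulff; assumption.
  - intros Heq x Wx. apply Heq, unit_disc_symmetric, Heq, Wx.
Qed.
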